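(* Consider $m$ edges, a fraction $\omega$ of which lie inside detected communities and a fraction $1-\omega$ outside. Each edge has a statistic $z$; for edges inside communities $z$ has density $\pi_0^{in}f_0+\pi_1^{in}f_1$ and for edges outside communities $z$ has density $\pi_0^{out}f_0+\pi_1^{out}f_1$ (where $\pi_0^{in}+\pi_1^{in}=1$, $\pi_0^{out}+\pi_1^{out}=1$, the component labelled $0$ corresponding to truly unconnected edges, $\delta=0$, and $1$ to truly connected edges, $\delta=1$), so that overall $\pi_0=\omega\pi_0^{in}+(1-\omega)\pi_0^{out}$, $\pi_1=1-\pi_0$. For $c\in\{0,1\}$ let $F_c(z_0)=\int_{z_0}^\infty f_c(z)\,dz$. The universal thresholding rule declares an edge connected ($\widehat\delta^{Univ}=1$) iff $z>z_0$; the NICE rule declares an edge inside communities connected iff $z>z_{0,in}$ and an edge outside communities connected iff $z>z_{0,out}$, where $z_{0,in}<z_0<z_{0,out}$. Suppose Condition 6 holds: $$\frac{F_0(z_0)-F_0(z_{0,out})}{F_0(z_{0,in})-F_0(z_0)}>\frac{\omega\pi_0^{in}}{(1-\omega)\pi_0^{out}},\qquad \frac{F_1(z_0)-F_1(z_{0,out})}{F_1(z_{0,in})-F_1(z_0)}<\frac{\omega\pi_1^{in}}{(1-\omega)\pi_1^{out}}.$$ Then (1) the expected number of false positive edges satisfies $\mathrm{E}\big(\sum_{i<j}I(\widehat\delta^{NICE}_{ij}=1,\ \delta_{ij}=0)\big)\le \mathrm{E}\big(\sum_{i<j}I(\widehat\delta^{Univ}_{ij}=1,\ \delta_{ij}=0)\big)$;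 and (2) the expected number of false negative edges satisfies $\mathrm{E}\big(\sum_{i<j}I(\widehat\delta^{NICE}_{ij}=0,\ \delta_{ij}=1)\big)\le \mathrm{E}\big(\sum_{i<j}I(\widehat\delta^{Univ}_{ij}=0,\ \delta_{ij}=1)\big)$.
   Context: This concerns thresholding of a correlation matrix whose edges (pairs $i<j$ of variables) are split into edges inside detected community subgraphs and edges outside them. $\omega=\big(\sum_{c=1}^C|V_c|(|V_c|-1)/2\big)/\big(|V|(|V|-1)/2\big)$ is the proportion of edges lying inside the communities $G_c=(V_c,E_c)$, $c=1,\dots,C$, of a vertex partition of $V$. $f_0$ (null) and $f_1$ (non-null) are densities common to inside and outside edges; $\delta_{ij}$ indicates whether edge $(i,j)$ is truly connected. $z_0$ is the universal threshold cutoff, $z_{0,in}$ the cutoff for within-community edges and $z_{0,out}$ the cutoff for edges outside communities. *)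

From HB Require Import structures.
From mathcomp Require Import all_boot all_order all_algebra.
From mathcomp Require Import all_classical all_reals all_analysis.
Set Implicit Arguments. Unset Strict Implicit. Unset Printing Implicit Defensive.
Import Order.TTheory GRing.Theory Num.Theory.
Local Open Scope classical_set_scope.
Local Open Scope ring_scope.

Definition edge_set (p : nat) : {set 'I_p * 'I_p} :=
  [set e : 'I_p * 'I_p | (e.1 < e.2)%N].

(* Communities are given by a labelling comm : 'I_p -> 'I_C of the vertices
   (a vertex partition); an edge lies inside the communities iff both
   endpoints are in the same community. *)
Definition inside (p C : nat) (comm : 'I_p -> 'I_C) (e : 'I_p * 'I_p) : bool :=
  comm e.1 == comm e.2.

(* omega = (sum_c |V_c|(|V_c|-1)/2) / (|V|(|V|-1)/2) : the proportion of edges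
   lying inside communities. *)
Definition omega (R : realType) (p C : nat) (comm : 'I_p -> 'I_C) : R :=
  #|[set e in edge_set p | inside comm e]|%:R / #|edge_set p|%:R.

Definition Ftail (R : realType) (f : R -> R) (t : R) : R :=
  Rintegral lebesgue_measure `]t, +oo[ f.

Definition univ_rule (R : realType) (z0 : R) (z : R) : bool := z0 < z.

Definition nice_rule (R : realType) (p C : nat) (comm : 'I_p -> 'I_C)
  (zin zout : R) (e : 'I_p * 'I_p) (z : R) : bool :=
  if inside comm e then zin < z else zout < z.

Definition num_FP (R : realType) (T : Type) (p : nat)
  (rule : 'I_p * 'I_p -> R -> bool) (z : 'I_p * 'I_p -> T -> R)
  (delta : 'I_p * 'I_p -> T -> bool) : T -> R :=
  fun w => \sum_(e in edge_set p) (rule e (z e w) && ~~ delta e w)%:R.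

Definition num_FN (R : realType) (T : Type) (p : nat)
  (rule : 'I_p * 'I_p -> R -> bool) (z : 'I_p * 'I_p -> T -> R)
  (delta : 'I_p * 'I_p -> T -> bool) : T -> R :=
  fun w => \sum_(e in edge_set p) (~~ rule e (z e w) && delta e w)%:R.

From HB Require Import structures.
From mathcomp Require Import all_boot all_order all_algebra.
From mathcomp Require Import all_classical all_reals all_analysis.
From mathcomp Require Import measurable_realfun.
From mathcomp.algebra_tactics Require Import ring lra.
Set Implicit Arguments. Unset Strict Implicit. Unset Printing Implicit Defensive.
Import Order.TTheory GRing.Theory Num.Theory.
Local Open Scope classical_set_scope.
Local Open Scope ring_scope.

(* Both expected error counts are sums over edges of per-edge error
   probabilities, and these depend only on whether the edge lies inside a
   community.  With n_in inside and n_out outside edges, a rule thresholding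
   inside edges at t_in and outside edges at t_out has
     E(FP) = n_in pi0^in F0(t_in) + n_out pi0^out F0(t_out),
     E(FN) = n_in pi1^in (1 - F1(t_in)) + n_out pi1^out (1 - F1(t_out)).
   Passing from the universal rule (t_in = t_out = z0) to NICE lowers the
   inside threshold and raises the outside one.  Since
   omega / (1 - omega) = n_in / n_out, the two inequalities of Condition 6
   say exactly that the change outside outweighs the change inside, for
   false positives and for false negatives respectively. *)

Section bool_expectation.
Context (R : realType) (d : measure_display) (T : measurableType d)
  (P : probability T R).

Lemma bool_indicE (b : T -> bool) :
  (fun w => (b w)%:R : R) = \1_[set w | b w].
Proof.
apply/funext => w; rewrite indicE.
by case: (boolP (b w)) => bw; [rewrite mem_set | rewrite memNset //; exact/negP].
Qed.

Lemma measurable_bool (b : T -> bool) : measurable [set w | b w] ->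
  measurable_fun setT (fun w => (b w)%:R : R).
Proof. by move=> mb; rewrite bool_indicE; exact: measurable_indic. Qed.

Lemma expectation_bool (b : T -> bool) : measurable [set w | b w] ->
  ('E_P[fun w => (b w)%:R] = P [set w | b w])%E.
Proof. by move=> mb; rewrite bool_indicE expectation_indic. Qed.

Lemma expectation_sum_ge0 (I : finType) (A : {set I}) (X : I -> T -> R) :
    (forall i w, 0 <= X i w) -> (forall i, measurable_fun setT (X i)) ->
  ('E_P[fun w => (\sum_(i in A) X i w)%R] = \sum_(i in A) 'E_P[X i])%E.
Proof.
move=> X_ge0 mX; rewrite unlock.
under eq_integral do rewrite -sumEFin big_mkcond.
rewrite ge0_integral_sum //=.
- rewrite [RHS]big_mkcond; apply: eq_bigr => i _; case: ifP => // _.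
  by rewrite integral0.
- by move=> i; case: (i \in A); [exact/measurable_EFinP | exact: measurable_cst].
- by move=> i w _; case: ifP => // _; rewrite lee_fin.
Qed.

End bool_expectation.

Section density.
Context (R : realType) (f : R -> R).
Hypotheses (mf : measurable_fun setT f) (f_ge0 : forall x, 0 <= f x)
  (f_int1 : (\int[lebesgue_measure]_x (f x)%:E = 1)%E).

Lemma integral_densityE (A : set R) : measurable A ->
  (\int[lebesgue_measure]_(x in A) (f x)%:E)%E
  = (Rintegral lebesgue_measure A f)%:E.
Proof.
move=> mA; rewrite /Rintegral fineK // ge0_fin_numE; last first.
  by apply: integral_ge0 => x _; rewrite lee_fin.
rewrite (@le_lt_trans _ _ 1%E) ?ltey // -f_int1.
apply: ge0_subset_integral => //; first exact/measurable_EFinP.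
by move=> x _; rewrite lee_fin.
Qed.

Lemma Rintegral_lower_tail (t : R) :
  Rintegral lebesgue_measure `]-oo, t] f = 1 - Ftail f t.
Proof.
have tailC : ~` [set` `]-oo, t]] = [set` `]t, +oo[] :> set R by rewrite setCitvl.
have split1 : (1 = \int[lebesgue_measure]_(x in `]-oo, t]) (f x)%:E
                 + \int[lebesgue_measure]_(x in `]t, +oo[) (f x)%:E)%E.
  rewrite -f_int1 -tailC -ge0_integral_setU ?setUv //.
  - exact: measurableC.
  - exact/measurable_EFinP.
  - by move=> x _; rewrite lee_fin.
  - by apply/disj_set2P; rewrite setICr.
move: split1; rewrite !integral_densityE // -EFinD => -[->].
by rewrite /Ftail addrK.
Qed.

End density.

Section threshold_rules.
Context (R : realType) (d : measure_display) (T : measurableType d)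
  (P : probability T R) (p C : nat) (comm : 'I_p -> 'I_C)
  (f0 f1 : R -> R) (pi0in pi0out : R)
  (z : 'I_p * 'I_p -> T -> R) (delta : 'I_p * 'I_p -> T -> bool).
Hypotheses (mf0 : measurable_fun setT f0) (mf1 : measurable_fun setT f1)
  (f0_ge0 : forall x, 0 <= f0 x) (f1_ge0 : forall x, 0 <= f1 x)
  (f0_int1 : (\int[lebesgue_measure]_x (f0 x)%:E = 1)%E)
  (f1_int1 : (\int[lebesgue_measure]_x (f1 x)%:E = 1)%E)
  (mz : forall e, measurable_fun setT (z e))
  (mdelta : forall e, measurable [set w | delta e w])
  (law0 : forall e, e \in edge_set p -> forall A : set R, measurable A ->
     P ([set w | delta e w = false] `&` (z e @^-1` A)) =
     ((if inside comm e then pi0in else pi0out)%:E *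
        \int[lebesgue_measure]_(x in A) (f0 x)%:E)%E)
  (law1 : forall e, e \in edge_set p -> forall A : set R, measurable A ->
     P ([set w | delta e w = true] `&` (z e @^-1` A)) =
     ((if inside comm e then 1 - pi0in else 1 - pi0out)%:E *
        \int[lebesgue_measure]_(x in A) (f1 x)%:E)%E).

Definition n_inside : R := #|[set e in edge_set p | inside comm e]|%:R.
Definition n_outside : R := #|[set e in edge_set p | ~~ inside comm e]|%:R.

Definition community_threshold (tin tout : R) (e : 'I_p * 'I_p) : R :=
  if inside comm e then tin else tout.

Lemma sum_by_community (gin gout : R) :
  \sum_(e in edge_set p) (if inside comm e then gin else gout)
  = n_inside * gin + n_outside * gout.
Proof.
rewrite (bigID (inside comm)) /= /n_inside /n_outside !mulr_natl -!sumr_const.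
by congr (_ + _); apply: eq_big => [e | e /andP[_ eC]];
  rewrite ?inE ?(negbTE eC) ?eC.
Qed.

Lemma omegaE : omega R comm = n_inside / (n_inside + n_outside).
Proof.
rewrite /omega -/n_inside.
have := sum_by_community 1 1; rewrite !mulr1.
under eq_bigr do rewrite if_same.
by rewrite sumr_const => <-.
Qed.

Lemma community_counts_gt0 : 0 < omega R comm < 1 ->
  0 < n_inside /\ 0 < n_outside.
Proof.
rewrite omegaE /n_inside /n_outside => /andP[w_gt0 w_lt1].
set a := #|_|%:R in w_gt0 w_lt1 *; set b := #|_|%:R in w_gt0 w_lt1 *.
have a_ge0 : 0 <= a by [].
have b_ge0 : 0 <= b by [].
have ab_gt0 : 0 < a + b.
  by rewrite lt_def addr_ge0 // andbT; apply: contraTneq w_gt0 => ->;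
    rewrite invr0 mulr0 ltxx.
split.
  by move: w_gt0; rewrite pmulr_lgt0 // invr_gt0.
by move: w_lt1; rewrite ltr_pdivrMr // mul1r ltrDl.
Qed.

Let measurable_edge_event e (c : bool) (A : set R) : measurable A ->
  measurable ([set w | delta e w = c] `&` z e @^-1` A).
Proof.
move=> mA; apply: measurableI; last by rewrite -[_ @^-1` _]setTI; exact: mz.
case: c; first exact: mdelta.
have -> : [set w | delta e w = false] = ~` [set w | delta e w].
  by apply/seteqP; split => w /=; case: (delta e w).
exact/measurableC/mdelta.
Qed.

Let FP_eventE e t : [set w | (t < z e w) && ~~ delta e w]
  = [set w | delta e w = false] `&` z e @^-1` `]t, +oo[.
Proof.
apply/seteqP; split => w /=; rewrite in_itv /= andbT;
  by case: (delta e w); case: (t < z e w) => //; case.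
Qed.

Let FN_eventE e t : [set w | ~~ (t < z e w) && delta e w]
  = [set w | delta e w = true] `&` z e @^-1` `]-oo, t].
Proof.
apply/seteqP; split => w /=; rewrite in_itv /= -leNgt;
  by case: (delta e w); case: (z e w <= t) => //; case.
Qed.

Lemma expectation_FP_edge e t : e \in edge_set p ->
  ('E_P[fun w => ((t < z e w) && ~~ delta e w)%:R%R]
   = ((if inside comm e then pi0in else pi0out) * Ftail f0 t)%:E)%E.
Proof.
move=> eE; rewrite expectation_bool FP_eventE; last exact: measurable_edge_event.
by rewrite law0 // (integral_densityE mf0 f0_ge0 f0_int1).
Qed.

Lemma expectation_FN_edge e t : e \in edge_set p ->
  ('E_P[fun w => (~~ (t < z e w) && delta e w)%:R%R]
   = ((if inside comm e then 1 - pi0in else 1 - pi0out)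
      * (1 - Ftail f1 t))%:E)%E.
Proof.
move=> eE; rewrite expectation_bool FN_eventE; last exact: measurable_edge_event.
by rewrite law1 // (integral_densityE mf1 f1_ge0 f1_int1) // Rintegral_lower_tail.
Qed.

Lemma expected_FP (tin tout : R) :
  ('E_P[num_FP (fun e x => community_threshold tin tout e < x)%R z delta]
   = (n_inside * (pi0in * Ftail f0 tin)
      + n_outside * (pi0out * Ftail f0 tout))%:E)%E.
Proof.
rewrite /num_FP expectation_sum_ge0 => [|e w|e]; last 2 first.
- by rewrite ler0n.
- by apply: measurable_bool; rewrite FP_eventE; exact: measurable_edge_event.
rewrite -sum_by_community -sumEFin; apply: eq_bigr => e eE.
by rewrite expectation_FP_edge // /community_threshold; case: ifP.
Qed.

Lemma expected_FN (tin tout : R) :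
  ('E_P[num_FN (fun e x => community_threshold tin tout e < x)%R z delta]
   = (n_inside * ((1 - pi0in) * (1 - Ftail f1 tin))
      + n_outside * ((1 - pi0out) * (1 - Ftail f1 tout)))%:E)%E.
Proof.
rewrite /num_FN expectation_sum_ge0 => [|e w|e]; last 2 first.
- by rewrite ler0n.
- by apply: measurable_bool; rewrite FN_eventE; exact: measurable_edge_event.
rewrite -sum_by_community -sumEFin; apply: eq_bigr => e eE.
by rewrite expectation_FN_edge // /community_threshold; case: ifP.
Qed.

End threshold_rules.

Lemma mixture_oddsE (R : realFieldType) (nin nout x y : R) :
  0 < nin + nout -> nout != 0 -> y != 0 ->
  (nin / (nin + nout) * x) / ((1 - nin / (nin + nout)) * y)
  = (nin * x) / (nout * y).
Proof.
move=> n_gt0 nout_neq0 y_neq0.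
have -> : 1 - nin / (nin + nout) = nout / (nin + nout) by field; rewrite gt_eqF.
by field; rewrite nout_neq0 y_neq0 gt_eqF.
Qed.

Lemma ltr_pdiv_cross (R : realFieldType) (u v a b : R) : 0 < v -> 0 < a ->
  (u / v < b / a) = (u * a < b * v).
Proof. by move=> v_gt0 a_gt0; rewrite ltr_pdivlMr // mulrAC ltr_pdivrMr. Qed.

Theorem theorem3 (R : realType) (d : measure_display) (T : measurableType d)
  (P : probability T R) (p C : nat) (comm : 'I_p -> 'I_C)
  (f0 f1 : R -> R)
  (mf0 : measurable_fun setT f0) (mf1 : measurable_fun setT f1)
  (f0_ge0 : forall x, 0 <= f0 x) (f1_ge0 : forall x, 0 <= f1 x)
  (f0_int1 : (\int[lebesgue_measure]_x (f0 x)%:E = 1)%E)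
  (f1_int1 : (\int[lebesgue_measure]_x (f1 x)%:E = 1)%E)
  (pi0in pi0out : R)
  (hpi0in : 0 < pi0in < 1) (hpi0out : 0 < pi0out < 1)
  (homega : 0 < omega R comm < 1)
  (z : 'I_p * 'I_p -> T -> R) (delta : 'I_p * 'I_p -> T -> bool)
  (mz : forall e, measurable_fun setT (z e))
  (mdelta : forall e, measurable [set w | delta e w])
  (* mixture model: conditionally on delta_e = c, z_e has density f_c,
     with P(delta_e = 0) = pi0^in or pi0^out according to where e lies *)
  (law0 : forall e, e \in edge_set p -> forall A : set R, measurable A ->
     P ([set w | delta e w = false] `&` (z e @^-1` A)) =
     ((if inside comm e then pi0in else pi0out)%:E *
        \int[lebesgue_measure]_(x in A) (f0 x)%:E)%E)
  (law1 : forall e, e \in edge_set p -> forall A : set R, measurable A ->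
     P ([set w | delta e w = true] `&` (z e @^-1` A)) =
     ((if inside comm e then 1 - pi0in else 1 - pi0out)%:E *
        \int[lebesgue_measure]_(x in A) (f1 x)%:E)%E)
  (z0 zin zout : R) (hzin : zin < z0) (hzout : z0 < zout)
  (* the ratios in Condition 6 are well defined *)
  (hden0 : Ftail f0 z0 < Ftail f0 zin) (hden1 : Ftail f1 z0 < Ftail f1 zin)
  (cond6a : (Ftail f0 z0 - Ftail f0 zout) / (Ftail f0 zin - Ftail f0 z0) >
            (omega R comm * pi0in) / ((1 - omega R comm) * pi0out))
  (cond6b : (Ftail f1 z0 - Ftail f1 zout) / (Ftail f1 zin - Ftail f1 z0) <
            (omega R comm * (1 - pi0in)) / ((1 - omega R comm) * (1 - pi0out))) :
  ('E_P[num_FP (nice_rule comm zin zout) z delta]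
     <= 'E_P[num_FP (fun _ => univ_rule z0) z delta])%E /\
  ('E_P[num_FN (nice_rule comm zin zout) z delta]
     <= 'E_P[num_FN (fun _ => univ_rule z0) z delta])%E.
Proof.
have [nin_gt0 nout_gt0] := community_counts_gt0 homega.
move: hpi0in hpi0out => /andP[pin_gt0 pin_lt1] /andP[pout_gt0 pout_lt1].
have niceE : nice_rule comm zin zout
             = fun e x => community_threshold comm zin zout e < x.
  apply/funext => e; apply/funext => x.
  by rewrite /nice_rule /community_threshold; case: ifP.
have univE : (fun _ => univ_rule z0)
             = fun e x => community_threshold comm z0 z0 e < x.
  by apply/funext => e; rewrite /community_threshold if_same.
rewrite niceE univE !(expected_FP mf0 f0_ge0 f0_int1 mz mdelta law0).
rewrite !(expected_FN mf1 f1_ge0 f1_int1 mz mdelta law1) !lee_fin.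
move: cond6a cond6b; rewrite omegaE !mixture_oddsE ?addr_gt0 ?gt_eqF ?subr_gt0 //.
rewrite !ltr_pdiv_cross ?mulr_gt0 ?subr_gt0 // => c6a c6b.
by split; lra.
Qed.
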